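(* Let $\mathbf{X}\in\mathbb{R}^{M\times N_x}$, $\mathbf{Y}\in\mathbb{R}^{M\times N_y}$ with $\mathbf{C}\mathbf{X}\neq0$, $\mathbf{C}\mathbf{Y}\neq0$, and let $\mathbf{K}_X=\mathbf{C}\mathbf{X}\mathbf{X}^\top\mathbf{C}$, $\mathbf{K}_Y=\mathbf{C}\mathbf{Y}\mathbf{Y}^\top\mathbf{C}$. Then $$\frac{\mathrm{CKA}(\mathbf{K}_X,\mathbf{K}_Y)}{\sqrt{\operatorname{rank}(\mathbf{K}_X)\operatorname{rank}(\mathbf{K}_Y)}}\le \mathrm{NBS}(\mathbf{K}_X,\mathbf{K}_Y)^2\le \min\big(\operatorname{rank}(\mathbf{K}_X),\operatorname{rank}(\mathbf{K}_Y)\big)\,\mathrm{CKA}(\mathbf{K}_X,\mathbf{K}_Y).$$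
   Context: $\mathbf{C}=\mathbf{I}-\tfrac1M\mathbf{1}\mathbf{1}^\top$ is the $M\times M$ centering matrix. For PSD $\mathbf{A}$, $\mathbf{A}^{1/2}$ is its unique PSD square root; the fidelity is $\mathcal{F}(\mathbf{A},\mathbf{B})=\operatorname{Tr}[(\mathbf{A}^{1/2}\mathbf{B}\mathbf{A}^{1/2})^{1/2}]$ and the normalized Bures similarity is $\mathrm{NBS}(\mathbf{A},\mathbf{B})=\mathcal{F}(\mathbf{A},\mathbf{B})/\sqrt{\operatorname{Tr}\mathbf{A}\operatorname{Tr}\mathbf{B}}$. Centered kernel alignment is $\mathrm{CKA}(\mathbf{A},\mathbf{B})=\operatorname{Tr}[\mathbf{A}\mathbf{B}]/\sqrt{\operatorname{Tr}[\mathbf{A}^2]\operatorname{Tr}[\mathbf{B}^2]}$. *)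

From HB Require Import structures.
From mathcomp Require Import all_boot all_order all_algebra.
From mathcomp Require Import boolp classical_sets reals.
Set Implicit Arguments. Unset Strict Implicit. Unset Printing Implicit Defensive.
Import Order.TTheory GRing.Theory Num.Theory.
Local Open Scope ring_scope.

Section Defs.
Variable R : realType.

Definition centering (M : nat) : 'M[R]_M :=
  1%:M - (M%:R)^-1 *: const_mx 1.

Definition psd (n : nat) (A : 'M[R]_n) : Prop :=
  A^T = A /\ forall v : 'cV[R]_n, 0 <= (v^T *m A *m v) 0 0.

(* the unique PSD square root of A (chosen by choice; for PSD A it exists
   and is unique) *)
Definition psd_sqrt (n : nat) (A : 'M[R]_n) : 'M[R]_n :=
  xget 0 [set S : 'M[R]_n | psd S /\ S *m S = A].

Definition fidelity (n : nat) (A B : 'M[R]_n) : R :=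
  \tr (psd_sqrt (psd_sqrt A *m B *m psd_sqrt A)).

Definition NBS (n : nat) (A B : 'M[R]_n) : R :=
  fidelity A B / Num.sqrt (\tr A * \tr B).

Definition CKA (n : nat) (A B : 'M[R]_n) : R :=
  \tr (A *m B) / Num.sqrt (\tr (A *m A) * \tr (B *m B)).

End Defs.

(* For a PSD matrix S with eigenvalues s_1, ..., s_n >= 0, of which k = rank S
   are nonzero, sum_i s_i^2 <= (sum_i s_i)^2 <= k * sum_i s_i^2, that is
   Tr[S^2] <= (Tr S)^2 <= rank S * Tr[S^2].  Applied to K_X and K_Y this
   compares the normalisations of CKA and NBS.  Applied to
   S = (K_X^{1/2} K_Y K_X^{1/2})^{1/2}, for which Tr S is the fidelity,
   Tr[S^2] = Tr[K_X K_Y] and rank S <= min(rank K_X, rank K_Y), it compares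
   their numerators.  Eigenvalues come from the spectral theorem for the
   complexified matrices; square roots are taken as polynomials in the matrix,
   which keeps them real and symmetric. *)

From HB Require Import structures.
From mathcomp Require Import all_boot all_order all_algebra.
From mathcomp Require Import boolp classical_sets reals.
From mathcomp Require Import complex ring.
Import Order.TTheory GRing.Theory Num.Theory.
Set Implicit Arguments. Unset Strict Implicit. Unset Printing Implicit Defensive.
Local Open Scope ring_scope.

Section SumOfSquares.
Variables (R : realFieldType) (I : finType).
Implicit Type f : I -> R.

Lemma sum_sqr_le_sqr_sum f : (forall i, 0 <= f i) ->
  \sum_i f i ^+ 2 <= (\sum_i f i) ^+ 2.
Proof.
move=> f_ge0; rewrite [leRHS]expr2 mulr_suml; apply: ler_sum => i _.
by rewrite expr2 ler_wpM2l // (bigD1 i) //= lerDl sumr_ge0.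
Qed.

(* Cauchy-Schwarz against the indicator of the support of f, proved through
   the nonnegative quadratic t |-> sum_i (f i - t [f i != 0])^2. *)
Lemma sqr_sum_le_supp_sum_sqr f :
  (\sum_i f i) ^+ 2 <= (\sum_i (f i != 0%R))%N%:R * \sum_i f i ^+ 2.
Proof.
rewrite natr_sum; set k := \sum_i (_ != _)%:R; set s := \sum_i f i.
set q := \sum_i f i ^+ 2.
have [k0 | k_neq0] := eqVneq k 0.
  suff -> : s = 0 by rewrite expr0n /= k0 mul0r.
  apply: big1 => i _; apply/eqP; apply: contra_eqT k0 => fi_neq0.
  rewrite /k (bigD1 i) //= fi_neq0 paddr_eq0 ?ler01 ?sumr_ge0 //.
  by rewrite oner_eq0.
have k_gt0 : 0 < k by rewrite lt_def k_neq0 sumr_ge0.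
have expand t :
    q - 2 * t * s + t ^+ 2 * k = \sum_i (f i - t * (f i != 0)%:R) ^+ 2.
  rewrite /q /s /k !mulr_sumr -sumrN -!big_split /=; apply: eq_bigr => i _.
  by have [->|_] := eqVneq (f i) 0; rewrite /= ?mulr0 ?mulr1; ring.
have : 0 <= (k * q - s ^+ 2) / k.
  have -> : (k * q - s ^+ 2) / k = q - 2 * (s / k) * s + (s / k) ^+ 2 * k.
    by field; rewrite k_neq0.
  by rewrite expand sumr_ge0 // => i _; rewrite sqr_ge0.
by rewrite pmulr_lge0 ?invr_gt0 // subr_ge0.
Qed.

End SumOfSquares.

Lemma mxrank_diag_mx (F : fieldType) n (d : 'rV[F]_n) :
  \rank (diag_mx d) = (\sum_j (d ord0 j != 0%R))%N.
Proof.
elim: n d => [|n IHn] d; first by rewrite big_ord0 flatmx0 mxrank0.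
move: d; rewrite -[n.+1]/(1 + n)%N => d; rewrite -[d]hsubmxK.
rewrite diag_mx_row rank_diag_block_mx IHn big_split_ord /=; congr (_ + _)%N.
  rewrite big_ord1; set a := lsubmx _.
  have -> : diag_mx a = (a 0 0)%:M by apply/matrixP => i j; rewrite !ord1 !mxE.
  rewrite row_mxEl; have [->|a_neq0] := eqVneq (a 0 0) 0.
    by rewrite raddf0 mxrank0.
  by rewrite mxrank_unit ?a_neq0 // unitmxE det_scalar expr1 unitfE.
by apply: eq_bigr => i _; rewrite row_mxEr.
Qed.

Lemma exists_interpolating_poly (F : fieldType) (f : F -> F) (s : seq F) :
  exists p : {poly F}, {in s, forall x, p.[x] = f x}.
Proof.
elim: s => [|x s [p Hp]]; first by exists 0.
have [xs | xNs] := boolP (x \in s).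
  by exists p => z; rewrite inE => /orP[/eqP->|]; apply: Hp.
pose v := \prod_(y <- s) ('X - y%:P).
have v_root y : y \in s -> v.[y] = 0.
  move=> ys; rewrite /v horner_prod; apply/eqP; rewrite prodf_seq_eq0.
  by apply/hasP; exists y => //=; rewrite hornerXsubC subrr.
have vx_neq0 : v.[x] != 0.
  rewrite /v horner_prod prodf_seq_neq0; apply/allP => y ys /=.
  by rewrite hornerXsubC subr_eq0; apply: contra xNs => /eqP->.
exists (p + ((f x - p.[x]) / v.[x]) *: v) => z; rewrite inE hornerD hornerZ.
case/orP => [/eqP-> | zs]; first by rewrite divfK // addrC subrK.
by rewrite (v_root z zs) mulr0 addr0 Hp.
Qed.

Lemma trmx_horner_mx (F : fieldType) n (A : 'M[F]_n.+1) p :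
  A^T = A -> (horner_mx A p)^T = horner_mx A p.
Proof.
move=> At; elim/poly_ind: p => [|p c IHp]; first by rewrite rmorph0 trmx0.
rewrite rmorphD rmorphM /= horner_mx_X horner_mx_C linearD /= trmx_mul IHp At.
by rewrite tr_scalar_mx (comm_mx_horner _ (erefl (A *m A))).
Qed.

Section RealSpectralTheorem.
Variable R : realType.
Local Notation C := R[i].
Local Notation toC := (real_complex R).
Local Notation "A ^c" := (map_mx toC A).
Local Open Scope sesquilinear_scope.

Lemma realC (x : R) : toC x \is Num.real.
Proof. by apply/complex_realP; exists x. Qed.

Lemma map_mx_realmx m n (A : 'M[R]_(m, n)) : A^c \is a realmx.
Proof. by apply/mxOverP => i j; rewrite mxE realC. Qed.

Lemma psd_hermsym n (A : 'M[R]_n) : psd A -> A^c \is hermsymmx.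
Proof.
move=> [At _]; apply: realsym_hermsym (map_mx_realmx A).
by apply/is_hermitianmxP; rewrite expr0 scale1r map_mx_id // map_trmx At.
Qed.

(* Writing a row of P as x + i y with x, y real, the real part of the
   corresponding diagonal entry of P A P^* is x^T A x + y^T A y. *)
Lemma psd_Re_conjmx_diag_ge0 m n (A : 'M[R]_n) (P : 'M[C]_(m, n)) j :
  psd A -> 0 <= 'Re ((P *m A^c *m P^t* ) j j).
Proof.
move=> [_ A_form_ge0].
pose x : 'cV[R]_n := \col_k complex.Re (P j k).
pose y : 'cV[R]_n := \col_k complex.Im (P j k).
have formE (v : 'cV[R]_n) :
    (v^T *m A *m v) 0 0 = \sum_l (\sum_k v k 0 * A k l) * v l 0.
  rewrite !mxE; apply: eq_bigr => l _; rewrite !mxE; congr (_ * _).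
  by apply: eq_bigr => k _; rewrite !mxE.
suff -> : 'Re ((P *m A^c *m P^t* ) j j)
    = toC ((x^T *m A *m x) 0 0 + (y^T *m A *m y) 0 0).
  by rewrite ler0c addr_ge0.
rewrite rmorphD !formE !rmorph_sum -big_split /= !mxE raddf_sum.
apply: eq_bigr => l _.
rewrite !mxE !rmorphM !rmorph_sum /= !mulr_suml -big_split raddf_sum.
apply: eq_bigr => k _.
rewrite !mxE !rmorphM /= !complexRe !complexIm mulrAC.
by rewrite (ReMr (realC _)) ReM Re_conj Im_conj mulrN opprK; ring.
Qed.

Definition spectral_decomp n (A : 'M[R]_n) (U : 'M[C]_n) (e : 'rV[R]_n) :=
  U \is unitarymx /\ A^c = U^t* *m diag_mx e^c *m U.

Lemma psd_spectral n (A : 'M[R]_n) : psd A ->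
  exists U : 'M[C]_n, exists2 e : 'rV[R]_n,
    (forall j, 0 <= e 0 j) & spectral_decomp A U e.
Proof.
move=> psdA; have A_herm := psd_hermsym psdA.
have /orthomx_spectralP := hermitian_normalmx A_herm.
set P := spectralmx _; set d := spectral_diag _ => AE.
have P_unitary : P \is unitarymx := spectral_unitarymx _.
rewrite invmx_unitary // in AE.
pose e := \row_j complex.Re (d 0 j).
have eE : e^c = d.
  apply/matrixP => i j; rewrite !mxE ord1 RRe_real //.
  exact: mxOverP (hermitian_spectral_diag_real A_herm) _ _.
exists P, e; last by split; rewrite // eE.
move=> j; rewrite -ler0c.
have -> : toC (e 0 j) = 'Re ((P *m A^c *m P^t* ) j j).
  rewrite -[LHS](Creal_ReP _ (realC _)); apply: congr1.
  rewrite [toC _](_ : _ = (diag_mx e^c) j j); last by rewrite !mxE eqxx mulr1n.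
  rewrite eE AE !mulmxA (unitarymxP P_unitary) mul1mx -!mulmxA.
  by rewrite (unitarymxP P_unitary) mulmx1.
exact: psd_Re_conjmx_diag_ge0.
Qed.

Section SpectralDecomposition.
Variables (n : nat) (A : 'M[R]_n) (U : 'M[C]_n) (e : 'rV[R]_n).
Hypothesis sA : spectral_decomp A U e.

Lemma spectral_decomp_trace : \tr A = \sum_j e 0 j.
Proof.
case: sA => U_unitary AE; apply: complexI.
rewrite -trace_map_mx AE mxtrace_mulC mulmxA (unitarymxP U_unitary) mul1mx.
by rewrite mxtrace_diag rmorph_sum; apply: eq_bigr => j _; rewrite mxE.
Qed.

Lemma spectral_decomp_rank : \rank A = (\sum_j (e ord0 j != 0%R))%N.
Proof.
case: sA => U_unitary AE; have U_unit := unitarymx_unit U_unitary.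
rewrite -(mxrank_map toC) AE mxrankMfree ?row_free_unit //.
rewrite -mxrank_tr trmx_mul mxrankMfree; last first.
  by rewrite row_free_unit unitmx_tr -invmx_unitary // unitmx_inv.
by rewrite mxrank_tr mxrank_diag_mx; apply: eq_bigr => j _; rewrite mxE fmorph_eq0.
Qed.

Lemma spectral_decomp_sqr : spectral_decomp (A *m A) U (\row_j e 0 j ^+ 2).
Proof.
case: sA => U_unitary AE; split => //; rewrite map_mxM AE.
rewrite -!mulmxA (mulmxA U) (unitarymxP U_unitary) mul1mx.
rewrite (mulmxA (diag_mx _)) mulmx_diag.
by congr (_ *m (diag_mx _ *m _)); apply/rowP => j; rewrite !mxE rmorphXn expr2.
Qed.

Lemma spectral_decomp_form_ge0 (v : 'cV[R]_n) :
  (forall j, 0 <= e 0 j) -> 0 <= (v^T *m A *m v) 0 0.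
Proof.
case: sA => U_unitary AE e_ge0; rewrite -ler0c.
have -> : toC ((v^T *m A *m v) 0 0) = ((v^T *m A *m v)^c) 0 0 by rewrite [RHS]mxE.
set w := U *m v^c.
have -> : (v^T *m A *m v)^c = w^t* *m diag_mx e^c *m w.
  have -> : w^t* = (v^T)^c *m U^t*.
    rewrite /w trmx_mul map_mxM !map_trmx; congr (_ *m _).
    by apply/matrixP => i j; rewrite !mxE; apply: conj_Creal; apply: realC.
  by rewrite !map_mxM AE !mulmxA.
rewrite mul_mx_diag !mxE sumr_ge0 // => l _; rewrite !mxE.
by rewrite mulrAC mulr_ge0 ?ler0c // mulrC mul_conjC_ge0.
Qed.

End SpectralDecomposition.

Lemma spectral_decomp_trace_sqr n (A : 'M[R]_n) U e :
  spectral_decomp A U e -> \tr (A *m A) = \sum_j e 0 j ^+ 2.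
Proof.
move/spectral_decomp_sqr/spectral_decomp_trace->.
by apply: eq_bigr => j _; rewrite mxE.
Qed.

Lemma spectral_decomp_horner n (A : 'M[R]_n.+1) U e p :
  spectral_decomp A U e -> spectral_decomp (horner_mx A p) U (\row_j p.[e 0 j]).
Proof.
case=> U_unitary AE; split => //.
have U_unit : U \is a GRing.unit by exact: unitarymx_unit.
have dE : map_mx (horner (map_poly toC p)) e^c = (\row_j p.[e 0 j])^c.
  by apply/rowP => j; rewrite !mxE horner_map.
rewrite map_horner_mx AE -invmx_unitary //.
by rewrite (@horner_mx_uconjC C n (map_poly toC p) U (diag_mx e^c) U_unit)
  horner_mx_diag dE.
Qed.

Lemma psd_sqrt_exists n (A : 'M[R]_n) : psd A -> exists S, psd S /\ S *m S = A.
Proof.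
case: n A => [|n] A psdA.
  exists 0; split; last by apply/matrixP => -[].
  by split; [apply/matrixP => -[] | move=> v; rewrite [v]flatmx0 mulmx0 mxE].
have [U [e e_ge0 sA]] := psd_spectral psdA.
have [p pE] := exists_interpolating_poly (@Num.sqrt R) [seq e 0 j | j <- enum 'I_n.+1].
have sS := spectral_decomp_horner p sA.
have sqrt_eE : \row_j p.[e 0 j] = \row_j Num.sqrt (e 0 j).
  by apply/rowP => j; rewrite !mxE pE // map_f ?mem_enum.
rewrite sqrt_eE in sS.
have sqr_sqrt_eE : \row_j (\row_k Num.sqrt (e 0 k)) 0 j ^+ 2 = e.
  by apply/rowP => j; rewrite !mxE sqr_sqrtr.
exists (horner_mx A p); split.
  split; first by apply: trmx_horner_mx; case: psdA.
  by move=> v; apply: (spectral_decomp_form_ge0 sS) => j; rewrite mxE sqrtr_ge0.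
apply: (@map_mx_inj _ _ toC); have [_ ->] := spectral_decomp_sqr sS.
by rewrite sqr_sqrt_eE; case: sA => _ ->.
Qed.

Section PsdTrace.
Variables (n : nat) (A : 'M[R]_n).
Hypothesis psdA : psd A.

Lemma psd_trace_ge0 : 0 <= \tr A.
Proof.
have [U [e e_ge0 sA]] := psd_spectral psdA.
by rewrite (spectral_decomp_trace sA) sumr_ge0.
Qed.

Lemma psd_trace_sqr_le : \tr (A *m A) <= \tr A ^+ 2.
Proof.
have [U [e e_ge0 sA]] := psd_spectral psdA.
rewrite (spectral_decomp_trace sA) (spectral_decomp_trace_sqr sA).
exact: sum_sqr_le_sqr_sum.
Qed.

Lemma psd_sqr_trace_le : \tr A ^+ 2 <= (\rank A)%:R * \tr (A *m A).
Proof.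
have [U [e _ sA]] := psd_spectral psdA.
rewrite (spectral_decomp_trace sA) (spectral_decomp_trace_sqr sA).
by rewrite (spectral_decomp_rank sA) sqr_sum_le_supp_sum_sqr.
Qed.

Lemma mxrank_psd_sqr : \rank (A *m A) = \rank A.
Proof.
have [U [e _ sA]] := psd_spectral psdA.
rewrite (spectral_decomp_rank sA) (spectral_decomp_rank (spectral_decomp_sqr sA)).
by apply: eq_bigr => j _; rewrite mxE sqrf_eq0.
Qed.

End PsdTrace.

End RealSpectralTheorem.

Section Psd.
Variable R : realType.

Lemma psd_sqrtP n (A : 'M[R]_n) :
  psd A -> psd (psd_sqrt A) /\ psd_sqrt A *m psd_sqrt A = A.
Proof.
move=> psdA; rewrite /psd_sqrt.
by have := xgetPex 0 (P := [set S : 'M[R]_n | psd S /\ S *m S = A]) (psd_sqrt_exists psdA).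
Qed.

Lemma psd_sandwich n (S B : 'M[R]_n) : psd S -> psd B -> psd (S *m B *m S).
Proof.
move=> [St _] [Bt B_form_ge0]; split; first by rewrite !trmx_mul St Bt mulmxA.
by move=> v; have := B_form_ge0 (S *m v); rewrite trmx_mul St !mulmxA.
Qed.

Lemma mxtrace_mul_trE m k (G : 'M[R]_(m, k)) :
  \tr (G *m G^T) = \sum_i \sum_j G i j ^+ 2.
Proof.
by apply: eq_bigr => i _; rewrite mxE; apply: eq_bigr => j _; rewrite mxE expr2.
Qed.

Lemma mxtrace_mul_tr_gt0 m k (G : 'M[R]_(m, k)) : G != 0 -> 0 < \tr (G *m G^T).
Proof.
case/matrix0Pn => i [j Gij_neq0].
rewrite mxtrace_mul_trE (bigD1 i) //= (bigD1 j) //= -addrA.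
apply: (@lt_le_trans _ _ (G i j ^+ 2)).
  by rewrite lt_def sqrf_eq0 Gij_neq0 sqr_ge0.
rewrite lerDl; apply: addr_ge0; first by rewrite sumr_ge0 // => l _; apply: sqr_ge0.
by rewrite sumr_ge0 // => i' _; rewrite sumr_ge0 // => l _; apply: sqr_ge0.
Qed.

Lemma mulmx_tr_eq0 m k (G : 'M[R]_(m, k)) : (G *m G^T == 0) = (G == 0).
Proof.
apply/eqP/eqP => [GGt0 | ->]; last by rewrite mul0mx.
apply/eqP; apply/negPn/negP => /mxtrace_mul_tr_gt0.
by rewrite GGt0 mxtrace0 ltxx.
Qed.

Lemma psd_mul_tr m k (G : 'M[R]_(m, k)) : psd (G *m G^T).
Proof.
split; first by rewrite trmx_mul trmxK.
move=> v; rewrite -!mulmxA mulmxA -[v^T *m G]trmxK trmx_mul trmxK mxE.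
by rewrite sumr_ge0 // => i _; rewrite !mxE -expr2 sqr_ge0.
Qed.

Lemma psd_trace_sqr_gt0 n (A : 'M[R]_n) : psd A -> A != 0 -> 0 < \tr (A *m A).
Proof. by move=> [At _] A_neq0; rewrite -[X in A *m X]At mxtrace_mul_tr_gt0. Qed.

Lemma psd_trace_gt0 n (A : 'M[R]_n) : psd A -> A != 0 -> 0 < \tr A.
Proof.
move=> psdA A_neq0; rewrite lt_def psd_trace_ge0 // andbT.
apply: contraTneq (psd_trace_sqr_gt0 psdA A_neq0) => trA0.
by rewrite -leNgt; apply: le_trans (psd_trace_sqr_le psdA) _; rewrite trA0 expr2 mulr0.
Qed.

Lemma trace_le_sqrt_rank_trace_sqr n (A : 'M[R]_n) :
  psd A -> \tr A <= Num.sqrt ((\rank A)%:R * \tr (A *m A)).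
Proof.
move=> psdA; rewrite -[leLHS]ger0_norm ?psd_trace_ge0 // -sqrtr_sqr.
exact/ler_wsqrtr/psd_sqr_trace_le.
Qed.

Lemma sqrt_trace_sqr_le_trace n (A : 'M[R]_n) :
  psd A -> Num.sqrt (\tr (A *m A)) <= \tr A.
Proof.
move=> psdA; rewrite -[leRHS]ger0_norm ?psd_trace_ge0 // -sqrtr_sqr.
exact/ler_wsqrtr/psd_trace_sqr_le.
Qed.

Lemma trmx_centering M : (centering R M)^T = centering R M.
Proof. by rewrite /centering linearB linearZ /= trmx1 trmx_const. Qed.

End Psd.

Definition fidelity_mx (R : realType) n (A B : 'M[R]_n) : 'M[R]_n :=
  psd_sqrt (psd_sqrt A *m B *m psd_sqrt A).

Section Fidelity.
Variables (R : realType) (n : nat) (A B : 'M[R]_n).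
Hypotheses (psdA : psd A) (psdB : psd B).
Local Notation S := (fidelity_mx A B).

Lemma fidelity_mxP : psd S /\ S *m S = psd_sqrt A *m B *m psd_sqrt A.
Proof. by apply: psd_sqrtP; apply: psd_sandwich (psd_sqrtP psdA).1 psdB. Qed.

Lemma mxtrace_fidelity_mx_sqr : \tr (S *m S) = \tr (A *m B).
Proof.
have [_ sqrtAE] := psd_sqrtP psdA; rewrite fidelity_mxP.2.
by set a := psd_sqrt A; rewrite -sqrtAE mxtrace_mulC mulmxA.
Qed.

Lemma mxrank_fidelity_mx_le : (\rank S <= minn (\rank A) (\rank B))%N.
Proof.
have [psdS SSE] := fidelity_mxP; have [psd_sqrtA sqrtAE] := psd_sqrtP psdA.
set a := psd_sqrt A in psd_sqrtA sqrtAE SSE *.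
rewrite leq_min -(mxrank_psd_sqr psdS) SSE; apply/andP; split.
  rewrite -sqrtAE (mxrank_psd_sqr psd_sqrtA).
  exact: leq_trans (mxrankM_maxl _ _) (mxrankM_maxl _ _).
by rewrite -mulmxA; apply: leq_trans (mxrankM_maxr _ _) (mxrankM_maxl _ _).
Qed.

Lemma mxtrace_mul_psd_ge0 : 0 <= \tr (A *m B).
Proof.
have [[St _] _] := fidelity_mxP.
rewrite -mxtrace_fidelity_mx_sqr -{2}St mxtrace_mul_trE.
by rewrite sumr_ge0 // => i _; rewrite sumr_ge0 // => j _; rewrite sqr_ge0.
Qed.

Lemma mxtrace_mul_le_fidelity_sqr : \tr (A *m B) <= fidelity A B ^+ 2.
Proof. by rewrite -mxtrace_fidelity_mx_sqr; apply: psd_trace_sqr_le; case: fidelity_mxP. Qed.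

Lemma fidelity_sqr_le_rank_mxtrace_mul :
  fidelity A B ^+ 2 <= (minn (\rank A) (\rank B))%:R * \tr (A *m B).
Proof.
have psdS := fidelity_mxP.1.
apply: le_trans (psd_sqr_trace_le psdS) _.
rewrite mxtrace_fidelity_mx_sqr ler_wpM2r ?mxtrace_mul_psd_ge0 // ler_nat.
exact: mxrank_fidelity_mx_le.
Qed.

End Fidelity.

Section CkaNbs.
Variables (R : realType) (n : nat) (A B : 'M[R]_n).
Hypotheses (psdA : psd A) (psdB : psd B) (A_neq0 : A != 0) (B_neq0 : B != 0).

Let trA_gt0 : 0 < \tr A := psd_trace_gt0 psdA A_neq0.
Let trB_gt0 : 0 < \tr B := psd_trace_gt0 psdB B_neq0.
Let trAA_gt0 : 0 < \tr (A *m A) := psd_trace_sqr_gt0 psdA A_neq0.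
Let trBB_gt0 : 0 < \tr (B *m B) := psd_trace_sqr_gt0 psdB B_neq0.

Let nbs_sqrE : NBS A B ^+ 2 = fidelity A B ^+ 2 / (\tr A * \tr B).
Proof. by rewrite /NBS expr_div_n sqr_sqrtr // ltW // mulr_gt0. Qed.

Lemma cka_div_sqrt_rank_le_nbs_sqr :
  CKA A B / Num.sqrt ((\rank A)%:R * (\rank B)%:R) <= NBS A B ^+ 2.
Proof.
have tr_gt0 := mulr_gt0 trA_gt0 trB_gt0.
have tr_le : \tr A * \tr B <=
    Num.sqrt (\tr (A *m A) * \tr (B *m B)) * Num.sqrt ((\rank A)%:R * (\rank B)%:R).
  rewrite -sqrtrM; last exact: ltW (mulr_gt0 trAA_gt0 trBB_gt0).
  have -> : \tr (A *m A) * \tr (B *m B) * ((\rank A)%:R * (\rank B)%:R)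
      = ((\rank A)%:R * \tr (A *m A)) * ((\rank B)%:R * \tr (B *m B)) by ring.
  rewrite sqrtrM; last exact: mulr_ge0 (ler0n _ _) (ltW trAA_gt0).
  exact: ler_pM (ltW trA_gt0) (ltW trB_gt0)
    (trace_le_sqrt_rank_trace_sqr psdA) (trace_le_sqrt_rank_trace_sqr psdB).
rewrite /CKA nbs_sqrE -mulrA -invfM.
apply: (@le_trans _ _ (\tr (A *m B) / (\tr A * \tr B))).
  apply: ler_wpM2l; first exact: mxtrace_mul_psd_ge0.
  have sqrt_gt0 := lt_le_trans tr_gt0 tr_le.
  by rewrite lef_pV2 ?posrE.
apply: ler_wpM2r; first by rewrite invr_ge0 ltW.
exact: mxtrace_mul_le_fidelity_sqr.
Qed.

Lemma nbs_sqr_le_minn_rank_cka :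
  NBS A B ^+ 2 <= (minn (\rank A) (\rank B))%:R * CKA A B.
Proof.
rewrite /CKA nbs_sqrE mulrA.
apply: (@le_trans _ _
  ((minn (\rank A) (\rank B))%:R * \tr (A *m B) / (\tr A * \tr B))).
  apply: ler_wpM2r; first by rewrite invr_ge0 ltW // mulr_gt0.
  exact: fidelity_sqr_le_rank_mxtrace_mul.
apply: ler_wpM2l; first by rewrite mulr_ge0 ?ler0n ?mxtrace_mul_psd_ge0.
have sqrt_gt0 : 0 < Num.sqrt (\tr (A *m A) * \tr (B *m B)).
  by rewrite sqrtr_gt0 mulr_gt0.
have tr_gt0 := mulr_gt0 trA_gt0 trB_gt0.
rewrite lef_pV2 ?posrE // sqrtrM; last exact: ltW.
exact: ler_pM (sqrtr_ge0 _) (sqrtr_ge0 _)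
  (sqrt_trace_sqr_le_trace psdA) (sqrt_trace_sqr_le_trace psdB).
Qed.

End CkaNbs.

Theorem mainTheorem4 (R : realType) (M Nx Ny : nat)
    (X : 'M[R]_(M, Nx)) (Y : 'M[R]_(M, Ny)) :
  centering R M *m X != 0 -> centering R M *m Y != 0 ->
  let KX := centering R M *m X *m X^T *m centering R M in
  let KY := centering R M *m Y *m Y^T *m centering R M in
  CKA KX KY / Num.sqrt ((\rank KX)%:R * (\rank KY)%:R) <= NBS KX KY ^+ 2 /\
  NBS KX KY ^+ 2 <= (minn (\rank KX) (\rank KY))%:R * CKA KX KY.
Proof.
move=> CX_neq0 CY_neq0 KX KY.
have gramE m (G : 'M[R]_(M, m)) :
    centering R M *m G *m G^T *m centering R M
    = (centering R M *m G) *m (centering R M *m G)^T.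
  by rewrite trmx_mul trmx_centering !mulmxA.
have psdKX : psd KX by rewrite /KX gramE; apply: psd_mul_tr.
have psdKY : psd KY by rewrite /KY gramE; apply: psd_mul_tr.
have KX_neq0 : KX != 0 by rewrite /KX gramE mulmx_tr_eq0.
have KY_neq0 : KY != 0 by rewrite /KY gramE mulmx_tr_eq0.
split; first exact: cka_div_sqrt_rank_le_nbs_sqr.
exact: nbs_sqr_le_minn_rank_cka.
Qed.
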